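(* Let $\mathcal S$ be the family of all subsets of $[n]$ of size at most $s$ (single-item $s$-unit auctions). Then for every $m\ge1$ and every sequence of valuation profiles $\vec v_1,\dots,\vec v_T\in[0,1]^n$, \[ \max_{\vec r\in\mathcal I}\sum_{t=1}^T\mathrm{Rev}(\vec r,\vec v_t)-\max_{\vec r\in\mathcal I_m}\sum_{t=1}^T\mathrm{Rev}(\vec r,\vec v_t)\le\frac{2Ts}{m}. \]
   Context: Setting: $n$ bidders with valuation profile $\vec v\in[0,1]^n$; feasible family $\mathcal S$ of sets of bidders that can be served. A VCG auction with bidder-specific reserves $\vec r$: bidders with $v_i<r_i$ are removed; if none remain nothing is allocated; otherwise a welfare-maximizing feasible set among the remaining bidders is served, and each served bidder pays the larger of $r_i$ and his VCG payment (for the $s$-unit case, the highest value among remaining bidders who are not served, or $0$ if all remaining bidders are served). $\mathrm{Rev}(\vec r,\vec v)$ is the total payment. $\mathcal I$ is the class of all such auctions with $\vec r\in[0,1]^n$, and $\mathcal I_m\subseteq\mathcal I$ those with every $r_i\in\{1/m,2/m,\dots,1\}$. *)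

From HB Require Import structures.
From mathcomp Require Import all_boot all_order all_algebra.
Set Implicit Arguments. Unset Strict Implicit. Unset Printing Implicit Defensive.
Import Order.TTheory GRing.Theory Num.Theory.
Local Open Scope ring_scope.

Section Auction.
Variables (R : realFieldType) (n s : nat).

Definition remaining (r v : 'I_n -> R) (i : 'I_n) : bool := r i <= v i.

Definition beats (v : 'I_n -> R) (j i : 'I_n) : bool :=
  (v i < v j) || ((v j == v i) && (j < i)%N).

(* served = the (at most) s best remaining bidders: a welfare-maximizing
   feasible set (|S| <= s) among remaining bidders *)
Definition served (r v : 'I_n -> R) (i : 'I_n) : bool :=
  remaining r v i && (#|[pred j | remaining r v j && beats v j i]| < s)%N.

Definition vcg_price (r v : 'I_n -> R) : R :=
  \big[Num.max/0]_(j | remaining r v j && ~~ served r v j) v j.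

Definition Rev (r v : 'I_n -> R) : R :=
  \sum_(i | served r v i) Num.max (r i) (vcg_price r v).

End Auction.

Definition in_Im (R : realFieldType) (n m : nat) (r : 'I_n -> R) : Prop :=
  forall i, exists k : nat, (1 <= k <= m)%N /\ r i = k%:R / m%:R.

From mathcomp Require Import all_boot all_order all_algebra.
From mathcomp Require Import ring lra zify.
Import Order.TTheory GRing.Theory Num.Theory.
Local Open Scope ring_scope.
Set Implicit Arguments. Unset Strict Implicit. Unset Printing Implicit Defensive.

(* Round every reserve down to the grid (1/m)N, then raise it to at least 1/m.
   Lowering all reserves by at most c costs at most s*c per round: the VCG
   price can only rise, so a bidder served before and after pays at most c
   less; a bidder who loses his slot paid at most his value, hence at most the
   new VCG price, and since at least as many bidders are served afterwards,
   each such loss is matched by a newly served bidder paying at least that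
   price.  Raising all reserves to a floor c serves exactly the previously
   served bidders of value at least c, without lowering their payments, and
   every dropped bidder paid less than c.  Each round thus loses at most
   2s/m. *)

Section SumCard.
Variables (R : realDomainType) (I : finType).
Implicit Types (P Q : pred I) (F G : I -> R).

Lemma sum_pred_const P (c : R) : \sum_(i | P i) c = #|[pred i | P i]|%:R * c.
Proof. by rewrite sumr_const mulr_natl. Qed.

Lemma ler_sum_card P F (c : R) (k : nat) :
  0 <= c -> (#|[pred i | P i]| <= k)%N -> (forall i, P i -> F i <= c) ->
  \sum_(i | P i) F i <= k%:R * c.
Proof.
move=> c_ge0 cardP F_le; apply: le_trans (ler_sum _ F_le) _.
by rewrite sum_pred_const ler_wpM2r // ler_nat.
Qed.

Lemma card_predID P Q :
  (#|[pred i | P i && Q i]| + #|[pred i | P i && ~~ Q i]|)%N = #|[pred i | P i]|.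
Proof.
rewrite -(cardID Q [pred i | P i]).
by congr (_ + _)%N; apply: eq_card => i; rewrite !inE // andbC.
Qed.

(* [P] and [Q] are the winners before and after a change; [p] is a price
   separating the losses from the gains. *)
Lemma sum_exchange_le P Q F G (c p : R) (k : nat) :
  0 <= c -> 0 <= p ->
  (#|[pred i | P i]| <= k)%N -> (#|[pred i | P i]| <= #|[pred i | Q i]|)%N ->
  (forall i, P i -> Q i -> F i <= G i + c) ->
  (forall i, P i -> ~~ Q i -> F i <= p) ->
  (forall i, Q i -> ~~ P i -> p <= G i) ->
  \sum_(i | P i) F i - \sum_(i | Q i) G i <= k%:R * c.
Proof.
move=> c_ge0 p_ge0 cardP cardPQ common lost gained.
have cardP_split := card_predID P Q; have cardQ_split := card_predID Q P.
have card_common : #|[pred i | Q i && P i]| = #|[pred i | P i && Q i]|.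
  by apply: eq_card => i; rewrite !inE andbC.
rewrite (bigID Q) [X in _ - X](bigID P) /=.
rewrite (eq_bigl (fun i => P i && Q i) G) => [|i]; last by rewrite andbC.
have common_le : \sum_(i | P i && Q i) F i <=
    \sum_(i | P i && Q i) G i + k%:R * c.
  rewrite -lerBlDl -sumrB; apply: ler_sum_card => // [|i /andP[Pi Qi]].
    by apply: leq_trans cardP; lia.
  by rewrite lerBlDl; exact: common.
have lost_le : \sum_(i | P i && ~~ Q i) F i <=
    #|[pred i | P i && ~~ Q i]|%:R * p.
  by apply: ler_sum_card => // i /andP[/lost].
have gained_ge : #|[pred i | Q i && ~~ P i]|%:R * p <=
    \sum_(i | Q i && ~~ P i) G i.
  by rewrite -sum_pred_const; apply: ler_sum => i /andP[/gained].
have lost_gained : #|[pred i | P i && ~~ Q i]|%:R * p <=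
    #|[pred i | Q i && ~~ P i]|%:R * p.
  by rewrite ler_wpM2r // ler_nat; lia.
lra.
Qed.
End SumCard.

Section Auction.
Variables (R : realFieldType) (n s : nat).
Implicit Types (r v : 'I_n -> R) (c : R) (i j k : 'I_n).

Lemma beats_irr v i : beats v i i = false.
Proof. by rewrite /beats ltxx eqxx ltnn. Qed.

Lemma beats_trans v j i k : beats v i j -> beats v j k -> beats v i k.
Proof.
rewrite /beats => /orP[h1|/andP[/eqP e1 l1]] /orP[h2|/andP[/eqP e2 l2]].
- by rewrite (lt_trans h2 h1).
- by rewrite -e2 h1.
- by rewrite e1 h2.
- by rewrite e1 e2 eqxx (ltn_trans l1 l2) orbT.
Qed.

Lemma beats_total v i j : i != j -> beats v i j || beats v j i.
Proof.
move=> neq_ij; rewrite /beats; case: ltgtP => //= eq_v; rewrite ?orbT //.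
by rewrite -neq_ltn.
Qed.

Lemma beats_le v j i : beats v j i -> v i <= v j.
Proof. by case/orP=> [/ltW //|/andP[/eqP -> _]]. Qed.

Definition rivals r v i := [pred j | remaining r v j && beats v j i].

Lemma servedE r v i :
  served s r v i = remaining r v i && (#|rivals r v i| < s)%N.
Proof. by []. Qed.

Lemma served_remaining r v i : served s r v i -> remaining r v i.
Proof. by case/andP. Qed.

Lemma card_rivals_lt r v i j : remaining r v j -> beats v j i ->
  (#|rivals r v j| < #|rivals r v i|)%N.
Proof.
move=> Rj bji; apply: proper_card; apply/properP; split.
  by apply/subsetP => k; rewrite !inE => /andP[-> /beats_trans]; apply.
by exists j; rewrite !inE ?Rj ?bji // beats_irr andbF.
Qed.

Lemma served_beats r v i j : served s r v i -> remaining r v j -> beats v j i ->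
  served s r v j.
Proof.
rewrite !servedE => /andP[_ cardi] Rj bji; rewrite Rj /=.
exact: ltn_trans (card_rivals_lt Rj bji) cardi.
Qed.

Lemma served_ge r v i j : served s r v i -> remaining r v j ->
  ~~ served s r v j -> v j <= v i.
Proof.
move=> Si Rj; apply: contraNle => lt_ij.
by apply: served_beats Si Rj _; rewrite /beats lt_ij.
Qed.

Lemma card_served_le r v : (#|[pred i | served s r v i]| <= s)%N.
Proof.
case: (pickP [pred i | served s r v i]) => [i0 Si0|none]; last first.
  by rewrite (eq_card0 none).
case: (arg_maxnP (fun i => #|rivals r v i|) Si0) => i /= Si imax.
have others_rivals : [predD1 [pred j | served s r v j] & i] \subset rivals r v i.
  apply/subsetP => j; rewrite !inE => /andP[neq_ji Sj].
  rewrite (served_remaining Sj) /=; case/orP: (beats_total v neq_ji) => // bij.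
  by have /= := imax j Sj; rewrite leqNgt card_rivals_lt // served_remaining.
rewrite (cardD1 i) inE Si add1n.
by apply: leq_ltn_trans (subset_leq_card others_rivals) _; case/andP: Si.
Qed.

Lemma served_all_or_card_ge r v :
  (forall i, remaining r v i -> served s r v i) \/
  (s <= #|[pred i | served s r v i]|)%N.
Proof.
set unserved := [pred j | remaining r v j && ~~ served s r v j].
case: (pickP unserved) => [j0 Uj0|none]; last first.
  by left => i Ri; move: (none i); rewrite /unserved /= Ri => /negbFE.
right; case: (arg_minnP (fun j => #|rivals r v j|) Uj0) => j /andP[Rj nSj] jmin.
have rivals_served : rivals r v j \subset [pred i | served s r v i].
  apply/subsetP => k; rewrite !inE => /andP[Rk bkj]; apply: contraT => nSk.
  by have := jmin k; rewrite /unserved /= Rk nSk leqNgt card_rivals_lt //; apply.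
apply: leq_trans (subset_leq_card rivals_served).
by move: nSj; rewrite servedE Rj -leqNgt.
Qed.

Lemma vcg_price_ge0 r v : 0 <= vcg_price s r v.
Proof. exact: bigmax_ge_id. Qed.

Lemma vcg_price_ge r v j : remaining r v j -> ~~ served s r v j ->
  v j <= vcg_price s r v.
Proof. by move=> Rj nSj; apply: le_bigmax_cond; rewrite Rj. Qed.

Section MoreRemaining.
Variables (r1 r2 v : 'I_n -> R).
Hypothesis remaining12 : forall i, remaining r1 v i -> remaining r2 v i.

Lemma served_more_remaining i :
  remaining r1 v i -> served s r2 v i -> served s r1 v i.
Proof.
rewrite !servedE => Ri /andP[_ card2]; rewrite Ri /=.
apply: leq_ltn_trans card2; apply: subset_leq_card; apply/subsetP => j.
by rewrite !inE => /andP[/remaining12 -> ->].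
Qed.

Lemma vcg_price_more_remaining : vcg_price s r1 v <= vcg_price s r2 v.
Proof.
apply: bigmax_le => [|j /andP[Rj nSj]]; first exact: vcg_price_ge0.
apply: vcg_price_ge; first exact: remaining12.
by apply: contra nSj; apply: served_more_remaining.
Qed.

Lemma card_served_more_remaining :
  (#|[pred i | served s r1 v i]| <= #|[pred i | served s r2 v i]|)%N.
Proof.
case: (served_all_or_card_ge r2 v) => [all_served|]; last first.
  exact/leq_trans/card_served_le.
apply: subset_leq_card; apply/subsetP => i; rewrite !inE => Si.
exact/all_served/remaining12/served_remaining.
Qed.

End MoreRemaining.

Definition payment r v i := Num.max (r i) (vcg_price s r v).

Lemma RevE r v : Rev s r v = \sum_(i | served s r v i) payment r v i.
Proof. by []. Qed.

Lemma payment_le_value r v i : (forall j, 0 <= v j) -> served s r v i ->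
  payment r v i <= v i.
Proof.
move=> v_ge0 Si; rewrite ge_max; apply/andP; split.
  exact: served_remaining Si.
apply: bigmax_le => [|j /andP[Rj nSj]]; first exact: v_ge0.
exact: served_ge Si Rj nSj.
Qed.

Lemma Rev_lower_reserves r r' v c : (forall j, 0 <= v j) -> 0 <= c ->
  (forall i, r' i <= r i) -> (forall i, r i <= r' i + c) ->
  Rev s r v - Rev s r' v <= s%:R * c.
Proof.
move=> v_ge0 c_ge0 r'_le r_le.
have remaining' i : remaining r v i -> remaining r' v i := le_trans (r'_le i).
have price_le := vcg_price_more_remaining remaining'.
rewrite !RevE; apply: (sum_exchange_le c_ge0 (vcg_price_ge0 r' v)).
- exact: card_served_le.
- exact: card_served_more_remaining.
- move=> i _ _; rewrite ge_max; apply/andP; split.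
    by apply: le_trans (r_le i) _; rewrite lerD2r le_max lexx.
  apply: le_trans price_le _.
  by rewrite -[vcg_price s r' v]addr0 lerD // le_max lexx orbT.
- move=> i Si nS'i; apply: le_trans (payment_le_value v_ge0 Si) _.
  exact/vcg_price_ge/nS'i/remaining'/served_remaining.
- by move=> i _ _; rewrite le_max lexx orbT.
Qed.

Section FloorReserves.
Variables (r v : 'I_n -> R) (c : R).
Let r_c i := Num.max (r i) c.

Lemma remaining_floor i : remaining r_c v i = remaining r v i && (c <= v i).
Proof. by rewrite /remaining ge_max. Qed.

Lemma served_floor i : served s r_c v i = served s r v i && (c <= v i).
Proof.
rewrite !servedE remaining_floor.
have [c_le|] := lerP c (v i); last by rewrite !andbF.
rewrite !andbT; congr (_ && (_ < s)%N); apply: eq_card => j.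
rewrite !inE remaining_floor; case bji: (beats v j i); rewrite ?andbF //.
by rewrite (le_trans c_le (beats_le bji)) !andbT.
Qed.

Lemma vcg_price_floor : vcg_price s r v <= Num.max c (vcg_price s r_c v).
Proof.
apply: bigmax_le => [|j /andP[Rj nSj]]; first by rewrite le_max vcg_price_ge0 orbT.
rewrite le_max; have [c_le|/ltW -> //] := lerP c (v j).
by rewrite vcg_price_ge ?orbT // ?remaining_floor ?served_floor ?Rj ?c_le ?andbT.
Qed.

Lemma payment_floor i : payment r v i <= payment r_c v i.
Proof.
rewrite /payment ge_max !le_max lexx /=.
by have := vcg_price_floor; rewrite le_max => /orP[->|->]; rewrite ?orbT.
Qed.

Lemma Rev_floor_reserves : (forall j, 0 <= v j) -> 0 <= c ->
  Rev s r v - Rev s r_c v <= s%:R * c.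
Proof.
move=> v_ge0 c_ge0; rewrite !RevE (bigID (fun i => c <= v i)) /=.
rewrite (eq_bigl (fun i => served s r v i && (c <= v i)) (payment r_c v)) => [|i];
  last exact: served_floor.
have kept : \sum_(i | served s r v i && (c <= v i)) payment r v i <=
    \sum_(i | served s r v i && (c <= v i)) payment r_c v i.
  by apply: ler_sum => i _; apply: payment_floor.
have dropped : \sum_(i | served s r v i && ~~ (c <= v i)) payment r v i <= s%:R * c.
  apply: ler_sum_card => // [|i /andP[Si]]; last first.
    by rewrite -ltNge => /(le_lt_trans (payment_le_value v_ge0 Si))/ltW.
  apply: leq_trans (card_served_le r v); apply: subset_leq_card.
  by apply/subsetP => i; rewrite !inE => /andP[].
lra.
Qed.

End FloorReserves.
End Auction.

Lemma exists_grid_floor (R : realDomainType) (d x : R) (N : nat) :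
  0 <= d -> 0 <= x -> x <= N%:R * d ->
  exists k, (k <= N)%N /\ k%:R * d <= x <= k%:R * d + d.
Proof.
move=> d_ge0 x_ge0; elim: N => [|N IH] x_le.
  by exists 0%N; rewrite mul0r add0r x_ge0 (le_trans x_le) // mul0r.
have [/IH [k [k_le bracket]]|lt_x] := lerP x (N%:R * d).
  by exists k; split; first exact: leqW.
by exists N; split=> //; rewrite (ltW lt_x) -[d in _ + d]mul1r -mulrDl natr1.
Qed.

Theorem mainTheorem6 (R : realFieldType) (n s m T : nat)
  (vs : 'I_T -> 'I_n -> R) :
  (1 <= m)%N ->
  (forall t i, 0 <= vs t i <= 1) ->
  forall r : 'I_n -> R, (forall i, 0 <= r i <= 1) ->
  exists r' : 'I_n -> R, in_Im m r' /\
    \sum_(t < T) Rev s r (vs t) - \sum_(t < T) Rev s r' (vs t)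
      <= 2%:R * T%:R * s%:R / m%:R.
Proof.
move=> m_ge1 vs_01 r r_01.
pose d : R := m%:R^-1.
have d_ge0 : 0 <= d by rewrite invr_ge0 ler0n.
have /fin_all_exists [k k_bracket] : forall i,
    exists k, (k <= m)%N /\ k%:R * d <= r i <= k%:R * d + d.
  move=> i; case/andP: (r_01 i) => r_ge0 r_le1; apply: exists_grid_floor => //.
  by rewrite mulfV // pnatr_eq0 -lt0n.
pose r_grid i := (k i)%:R * d.
exists (fun i => Num.max (r_grid i) d); split.
  move=> i; exists (maxn (k i) 1); split.
    by rewrite leq_max orbT geq_max m_ge1 andbT; case: (k_bracket i).
  by rewrite -maxEnat natr_max maxr_pMl // mul1r.
have per_round t :
    Rev s r (vs t) - Rev s (fun i => Num.max (r_grid i) d) (vs t) <= 2%:R * s%:R * d.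
  have v_ge0 j : 0 <= vs t j by case/andP: (vs_01 t j).
  have lower : Rev s r (vs t) - Rev s r_grid (vs t) <= s%:R * d.
    by apply: Rev_lower_reserves => // i; case: (k_bracket i) => _ /andP[].
  have := Rev_floor_reserves s r_grid v_ge0 d_ge0; lra.
rewrite -sumrB; apply: le_trans (ler_sum _ (fun t _ => per_round t)) _.
rewrite sumr_const card_ord -[_ *+ T]mulr_natr.
suff -> : 2%:R * s%:R * d * T%:R = 2%:R * T%:R * s%:R / m%:R by [].
by rewrite /d; ring.
Qed.
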